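(* Let $(X,d)$ be a tree space, let $x,y,z\in X$ be distinct, let $r\in X$ be the Steiner point of $x,y,z$, and let $V\subseteq X\setminus\{x,y,z\}$ be a finite set of points. Then: (1) If $w\in \mathrm{Zone}_1(x)$, then for every $\hat w\in V\setminus \mathrm{Zone}_1(x)$ we have $x\in g(w,\hat w)$. (2) If $w\in \mathrm{Zone}_2(x)$, then for every $\hat w\in V\setminus\big(\mathrm{Zone}_1(x)\cup\mathrm{Zone}_2(x)\big)$ we have $r\in g(w,\hat w)$.
   Context: A tree space ($\mathbb{R}$-tree) is a metric space in which any two points $a,b$ are joined by a unique geodesic segment $g(a,b)$, and the union of two geodesic segments $g(a,b),g(b,c)$ meeting only at $b$ is $g(a,c)$. For distinct $x,y,z$ in a tree space, the geodesics $g(x,y),g(y,z),g(x,z)$ meet in a unique point $r$, the Steiner point (it is the center of the universal tree on $x,y,z$, with $d(x,r)=(y,z)_x$ etc.). The Gromov product is $(a,b)_c=\tfrac12\big(d(c,a)+d(c,b)-d(a,b)\big)$. For $w\in V$ and a permutation $\pi$ of $\{x,y,z\}$ define the zones: $w\in\mathrm{Zone}_1(r)$ if $(x,y)_w=(x,z)_w=(y,z)_w>0$; $w\in\mathrm{Zone}_1(\pi x)$ if $(\pi x,\pi y)_w=(\pi x,\pi z)_w<(\pi y,\pi z)_w$ and $d(\pi x,w)=(\pi x,\pi y)_w$; $w\in\mathrm{Zone}_2(\pi x)$ if $(\pi x,\pi y)_w=(\pi x,\pi z)_w<(\pi y,\pi z)_w$ and $d(\pi x,w)>(\pi x,\pi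 y)_w$. (In particular $\mathrm{Zone}_1(x),\mathrm{Zone}_2(x)$ are these with $\pi$ the identity.) *)

From Stdlib Require Import Reals List.
Open Scope R_scope.

Definition is_metric {X : Type} (d : X -> X -> R) : Prop :=
  (forall a b, 0 <= d a b) /\
  (forall a b, d a b = 0 <-> a = b) /\
  (forall a b, d a b = d b a) /\
  (forall a b c, d a c <= d a b + d b c).

Definition geodesic {X : Type} (d : X -> X -> R) (f : R -> X) (a b : X) : Prop :=
  f 0 = a /\ f (d a b) = b /\
  (forall s t, 0 <= s <= d a b -> 0 <= t <= d a b -> d (f s) (f t) = Rabs (s - t)).

Definition geod_image {X : Type} (d : X -> X -> R) (f : R -> X) (a b : X) (p : X) : Prop :=
  exists t, 0 <= t <= d a b /\ f t = p.

Definition in_g {X : Type} (d : X -> X -> R) (a b p : X) : Prop :=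
  exists f, geodesic d f a b /\ geod_image d f a b p.

Definition tree_space {X : Type} (d : X -> X -> R) : Prop :=
  is_metric d /\
  (forall a b, exists f, geodesic d f a b) /\
  (forall a b f1 f2, geodesic d f1 a b -> geodesic d f2 a b ->
     forall p, geod_image d f1 a b p <-> geod_image d f2 a b p) /\
  (forall a b c, (forall p, in_g d a b p -> in_g d b c p -> p = b) ->
     forall p, in_g d a c p <-> (in_g d a b p \/ in_g d b c p)).

Definition gromov {X : Type} (d : X -> X -> R) (a b c : X) : R :=
  (d c a + d c b - d a b) / 2.

Definition steiner_point {X : Type} (d : X -> X -> R) (x y z r : X) : Prop :=
  in_g d x y r /\ in_g d y z r /\ in_g d x z r.

Definition zone1 {X : Type} (d : X -> X -> R) (x y z w : X) : Prop :=
  gromov d x y w = gromov d x z w /\ gromov d x z w < gromov d y z w /\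
  d x w = gromov d x y w.

Definition zone2 {X : Type} (d : X -> X -> R) (x y z w : X) : Prop :=
  gromov d x y w = gromov d x z w /\ gromov d x z w < gromov d y z w /\
  d x w > gromov d x y w.

From Stdlib Require Import Reals List Lra Classical.
Open Scope R_scope.

Set Implicit Arguments.

(* In a tree space, [p] lies on g(a,b) iff [d a p + d p b = d a b], i.e.
   [between d a p b].  Medians exist: the geodesics from [e] to [a] and
   to [b] share a longest initial segment, and its endpoint lies on g(a,b) by the
   gluing axiom.  Consequently, if [p] is on g(a,b) but not on g(a,c), then [p]
   is on g(c,b) (between_branch).

   A point [w] is in Zone_1(x) iff [x] is on g(w,y) and on g(w,z), and it is in
   Zone_1(x) or Zone_2(x) iff the Steiner point [r] is on g(w,y) and on g(w,z)
   but not on g(w,x).  If [x] is not on g(w,ŵ) for some [w] in Zone_1(x), then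
   between_branch hands both properties of [w] to [ŵ], so [ŵ] is in Zone_1(x).
   If [r] is not on g(w,ŵ) for some [w] in Zone_2(x), then likewise [r] is on
   g(ŵ,y) and g(ŵ,z); if [ŵ] is outside both zones, [r] is on g(ŵ,x), and
   between_branch once more puts [r] on g(w,x), which is impossible. *)

Definition between {X : Type} (d : X -> X -> R) (a p b : X) : Prop :=
  d a p + d p b = d a b.

Definition zone12 {X : Type} (d : X -> X -> R) (x y z w : X) : Prop :=
  gromov d x y w = gromov d x z w /\ gromov d x z w < gromov d y z w.

Section MetricSpace.

Context {X : Type} {d : X -> X -> R} (Hm : is_metric d).

Lemma dist_ge0 a b : 0 <= d a b.
Proof. exact (proj1 Hm a b). Qed.

Lemma dist_eq0 a b : d a b = 0 <-> a = b.
Proof. exact (proj1 (proj2 Hm) a b). Qed.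

Lemma dist_sym a b : d a b = d b a.
Proof. exact (proj1 (proj2 (proj2 Hm)) a b). Qed.

Lemma dist_triangle a b c : d a c <= d a b + d b c.
Proof. exact (proj2 (proj2 (proj2 Hm)) a b c). Qed.

Lemma dist_self a : d a a = 0.
Proof. now apply dist_eq0. Qed.

Lemma between_sym a p b : between d a p b -> between d b p a.
Proof.
  unfold between. rewrite (dist_sym a p), (dist_sym p b), (dist_sym a b). lra.
Qed.

Lemma between_r a b : between d a b b.
Proof. unfold between. rewrite dist_self. lra. Qed.

Lemma between_trans a p q b :
  between d a p q -> between d a q b -> between d a p b.
Proof.
  unfold between. intros Hp Hq.
  pose proof (dist_triangle a p b). pose proof (dist_triangle p q b). lra.
Qed.

Lemma geodesic_dist_l f a b t :
  geodesic d f a b -> 0 <= t <= d a b -> d a (f t) = t.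
Proof.
  intros [f0 [_ iso]] Ht.
  assert (H := iso 0 t ltac:(lra) Ht). rewrite f0 in H.
  rewrite H, Rabs_left1; lra.
Qed.

Lemma geodesic_dist_r f a b t :
  geodesic d f a b -> 0 <= t <= d a b -> d (f t) b = d a b - t.
Proof.
  intros [_ [fb iso]] Ht.
  assert (H := iso t (d a b) Ht ltac:(lra)). rewrite fb in H.
  rewrite H, Rabs_left1; lra.
Qed.

Lemma geodesic_between f a b t :
  geodesic d f a b -> 0 <= t <= d a b -> between d a (f t) b.
Proof.
  intros Hf Ht. unfold between.
  rewrite (geodesic_dist_l Hf Ht), (geodesic_dist_r Hf Ht). ring.
Qed.

Lemma in_g_between a b p : in_g d a b p -> between d a p b.
Proof. intros [f [Hf [t [Ht <-]]]]. exact (geodesic_between Hf Ht). Qed.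

Lemma geodesic_concat f1 f2 a p b :
  between d a p b -> geodesic d f1 a p -> geodesic d f2 p b ->
  geodesic d (fun s => if Rle_dec s (d a p) then f1 s else f2 (s - d a p)) a b.
Proof.
  intros Hp Hf1 Hf2. unfold between in Hp.
  pose proof (dist_ge0 a p). pose proof (dist_ge0 p b).
  assert (cross : forall s t, 0 <= s <= d a p -> d a p < t <= d a b ->
            d (f1 s) (f2 (t - d a p)) = t - s).
  { intros s t Hs Ht.
    assert (Hu : 0 <= t - d a p <= d p b) by lra.
    pose proof (geodesic_dist_l Hf1 Hs). pose proof (geodesic_dist_r Hf1 Hs).
    pose proof (geodesic_dist_l Hf2 Hu). pose proof (geodesic_dist_r Hf2 Hu).
    pose proof (dist_triangle (f1 s) p (f2 (t - d a p))).
    pose proof (dist_triangle a (f1 s) b).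
    pose proof (dist_triangle (f1 s) (f2 (t - d a p)) b).
    lra. }
  destruct Hf1 as [f10 [f1p f1i]], Hf2 as [f20 [f2b f2i]].
  split; [| split].
  - destruct Rle_dec; [exact f10 | lra].
  - destruct Rle_dec as [Hle | Hgt].
    + assert (Hpb : d p b = 0) by lra. apply dist_eq0 in Hpb. subst b.
      exact f1p.
    + replace (d a b - d a p) with (d p b) by lra. exact f2b.
  - intros s t Hs Ht.
    destruct (Rle_dec s (d a p)), (Rle_dec t (d a p)).
    + apply f1i; lra.
    + rewrite cross by lra. rewrite Rabs_left1; lra.
    + rewrite dist_sym, cross by lra. rewrite Rabs_right; lra.
    + replace (s - t) with ((s - d a p) - (t - d a p)) by ring. apply f2i; lra.
Qed.

Lemma zone1_iff x y z w :
  zone1 d x y z w <-> between d w x y /\ between d w x z /\ 0 < gromov d y z x.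
Proof.
  unfold zone1, between, gromov. rewrite (dist_sym x w).
  split; intros (H1 & H2 & H3); repeat split; lra.
Qed.

Lemma zone12_iff x y z w :
  zone12 d x y z w <-> zone1 d x y z w \/ zone2 d x y z w.
Proof.
  unfold zone12, zone1, zone2. split.
  - intros [H1 H2].
    assert (Hle : gromov d x y w <= d x w).
    { unfold gromov. rewrite (dist_sym x w).
      pose proof (dist_triangle w x y). lra. }
    destruct (Rle_lt_or_eq_dec _ _ Hle); [right | left]; repeat split; auto.
  - intros [(H1 & H2 & _) | (H1 & H2 & _)]; split; auto.
Qed.

Lemma zone12_iff_not_between x y z r w :
  between d x r y -> between d y r z -> between d x r z ->
  between d w r y -> between d w r z ->
  zone12 d x y z w <-> ~ between d w r x.
Proof.
  unfold zone12, between, gromov. intros Hxy Hyz Hxz Hwy Hwz.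
  pose proof (dist_sym x r). pose proof (dist_sym y r).
  pose proof (dist_triangle w r x).
  split.
  - intros [_ Hlt] Hwx. lra.
  - intros Hwx. split; [lra |].
    destruct (Rle_lt_or_eq_dec _ _ (dist_triangle w r x)); [lra | now destruct Hwx].
Qed.

End MetricSpace.

Section TreeSpace.

Context {X : Type} {d : X -> X -> R} (Ht : tree_space d).

Let Hm : is_metric d := proj1 Ht.

Let geodesic_exists : forall a b, exists f, geodesic d f a b :=
  proj1 (proj2 Ht).

Let geodesic_unique : forall a b f1 f2, geodesic d f1 a b -> geodesic d f2 a b ->
    forall p, geod_image d f1 a b p <-> geod_image d f2 a b p :=
  proj1 (proj2 (proj2 Ht)).

Let geodesic_glue : forall a b c, (forall p, in_g d a b p -> in_g d b c p -> p = b) ->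
    forall p, in_g d a c p <-> (in_g d a b p \/ in_g d b c p) :=
  proj2 (proj2 (proj2 Ht)).

Lemma between_in_g a b p : between d a p b -> in_g d a b p.
Proof.
  intros Hp.
  destruct (geodesic_exists a p) as [f1 Hf1], (geodesic_exists p b) as [f2 Hf2].
  eexists; split; [exact (geodesic_concat Hm Hp Hf1 Hf2) |].
  pose proof (dist_ge0 Hm a p). pose proof (dist_ge0 Hm p b). unfold between in Hp.
  exists (d a p). split; [lra |].
  destruct Rle_dec; [exact (proj1 (proj2 Hf1)) | lra].
Qed.

Lemma geodesic_at f a p b : geodesic d f a b -> between d a p b -> f (d a p) = p.
Proof.
  intros Hf Hp. destruct (between_in_g Hp) as [g [Hg Hpg]].
  destruct (proj1 (geodesic_unique Hg Hf p) Hpg) as [t [Htab <-]].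
  now rewrite (geodesic_dist_l Hf Htab).
Qed.

Lemma between_unique a b p q :
  between d a p b -> between d a q b -> d a p = d a q -> p = q.
Proof.
  intros Hp Hq E. destruct (geodesic_exists a b) as [f Hf].
  now rewrite <- (geodesic_at Hf Hp), <- (geodesic_at Hf Hq), E.
Qed.

Lemma between_exists a b t :
  0 <= t <= d a b -> exists p, between d a p b /\ d a p = t.
Proof.
  intros Htab. destruct (geodesic_exists a b) as [f Hf].
  exists (f t). exact (conj (geodesic_between Hf Htab) (geodesic_dist_l Hf Htab)).
Qed.

Lemma between_order a p q b :
  between d a p b -> between d a q b -> d a p <= d a q -> between d a p q.
Proof.
  intros Hp Hq Hle.
  destruct (@between_exists a q (d a p)) as [p' [Hp'q Hp']].
  { pose proof (dist_ge0 Hm a p). lra. }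
  rewrite (between_unique Hp (between_trans Hm Hp'q Hq) (eq_sym Hp')).
  exact Hp'q.
Qed.

Lemma farthest_common_point e a b :
  exists m, between d e m a /\ between d e m b /\
    forall p, between d e p a -> between d e p b -> d e p <= d e m.
Proof.
  set (E t := exists p, between d e p a /\ between d e p b /\ d e p = t).
  assert (Hbound : is_upper_bound E (d e a)).
  { intros t [p [Hpa [_ <-]]]. unfold between in Hpa.
    pose proof (dist_ge0 Hm p a). lra. }
  assert (HE0 : E 0).
  { exists e. unfold between. rewrite (dist_self Hm). repeat split; lra. }
  destruct (completeness E (ex_intro _ _ Hbound) (ex_intro _ 0 HE0)) as [s [Hub Hlub]].
  assert (Hs : 0 <= s <= d e a).
  { split; [now apply Hub | now apply Hlub]. }
  destruct (between_exists Hs) as [m [Hma Hms]].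
  assert (Hmb : between d e m b).
  { apply NNPP. intros Hn. unfold between in Hn.
    pose proof (dist_triangle Hm e m b).
    set (eta := d e m + d m b - d e b).
    destruct (classic (exists t, E t /\ s - eta / 2 < t))
      as [[t [[p [Hpa [Hpb <-]]] Hlt]] | Hno].
    - assert (Hps : d e p <= s) by (apply Hub; exists p; auto).
      assert (Hpm : between d e p m) by (apply (between_order Hpa Hma); lra).
      unfold between in Hpm, Hpb.
      pose proof (dist_triangle Hm m p b). rewrite (dist_sym Hm m p) in *.
      unfold eta in *. lra.
    - assert (s <= s - eta / 2).
      { apply Hlub. intros t Et. apply Rnot_lt_le. intros Hlt. apply Hno. eauto. }
      unfold eta in *. lra. }
  exists m. split; [exact Hma | split; [exact Hmb |]].
  intros p Hpa Hpb. rewrite Hms. apply Hub. now exists p.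
Qed.

Lemma median_exists e a b :
  exists m, between d e m a /\ between d e m b /\ between d a m b.
Proof.
  destruct (farthest_common_point e a b) as [m [Hma [Hmb Hfar]]].
  exists m. split; [exact Hma | split; [exact Hmb |]].
  assert (Hcut : forall p, in_g d a m p -> in_g d m b p -> p = m).
  { intros p Hap Hpb. apply in_g_between in Hap, Hpb.
    assert (Hpa : between d e p a).
    { exact (between_sym Hm (between_trans Hm Hap (between_sym Hm Hma))). }
    assert (Hpb' : between d e p b).
    { apply (between_sym Hm).
      exact (between_trans Hm (between_sym Hm Hpb) (between_sym Hm Hmb)). }
    pose proof (Hfar p Hpa Hpb').
    pose proof (dist_ge0 Hm p m).
    unfold between in Hma, Hap, Hpa.
    rewrite (dist_sym Hm m a), (dist_sym Hm p a) in *.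
    assert (Hpm : d p m = 0) by lra.
    now apply (dist_eq0 Hm) in Hpm. }
  apply in_g_between, (proj2 (geodesic_glue Hcut m)).
  left. apply between_in_g, (between_r Hm).
Qed.

Lemma between_branch a p b c :
  between d a p b -> ~ between d a p c -> between d c p b.
Proof.
  intros Hpb Hpc.
  destruct (median_exists a b c) as [m [Hmb [Hmc Hbmc]]].
  destruct (Rle_lt_dec (d a p) (d a m)) as [Hle | Hlt].
  - exfalso. apply Hpc, (between_trans Hm (between_order Hpb Hmb Hle) Hmc).
  - pose proof (between_order Hmb Hpb (Rlt_le _ _ Hlt)) as Hmp.
    unfold between in *.
    pose proof (dist_triangle Hm c m p). pose proof (dist_triangle Hm c p b).
    rewrite (dist_sym Hm c b), (dist_sym Hm c m), (dist_sym Hm m b) in *.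
    lra.
Qed.

Lemma between_branch_sym a p b c :
  between d a p b -> ~ between d c p a -> between d c p b.
Proof.
  intros Hpb Hpc. apply (between_branch Hpb). intros h. exact (Hpc (between_sym Hm h)).
Qed.

Lemma zone1_between x y z w wh :
  zone1 d x y z w -> ~ zone1 d x y z wh -> between d w x wh.
Proof.
  rewrite !(zone1_iff Hm). intros (Hwy & Hwz & Hyz) Hwh.
  apply NNPP. intros Hn.
  apply Hwh. exact (conj (between_branch Hwy Hn) (conj (between_branch Hwz Hn) Hyz)).
Qed.

Section Steiner.

Variables x y z r : X.
Hypotheses (Hxy : between d x r y) (Hyz : between d y r z) (Hxz : between d x r z).

Lemma zone12_between_steiner w :
  zone12 d x y z w -> between d w r y /\ between d w r z.
Proof.
  intros [Heq Hlt].
  split; apply NNPP; intros Hn.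
  - pose proof (between_branch_sym Hyz Hn) as Hwz.
    pose proof (between_branch_sym (between_sym Hm Hxy) Hn) as Hwx.
    unfold between, gromov in *.
    pose proof (dist_sym Hm r x). pose proof (dist_sym Hm y r). lra.
  - pose proof (between_branch_sym (between_sym Hm Hyz) Hn) as Hwy.
    pose proof (between_branch_sym (between_sym Hm Hxz) Hn) as Hwx.
    unfold between, gromov in *.
    pose proof (dist_sym Hm r x). pose proof (dist_sym Hm y r).
    pose proof (dist_sym Hm z r). lra.
Qed.

Lemma zone12_between w wh :
  zone12 d x y z w -> ~ zone12 d x y z wh -> between d w r wh.
Proof.
  intros Hw Hwh. apply NNPP. intros Hn.
  destruct (zone12_between_steiner Hw) as [Hwy Hwz].
  pose proof (proj1 (zone12_iff_not_between Hm Hxy Hyz Hxz Hwy Hwz) Hw) as Hwx.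
  pose proof (between_branch Hwy Hn) as Hwhy.
  pose proof (between_branch Hwz Hn) as Hwhz.
  assert (Hwhx : between d wh r x).
  { apply NNPP. intros h. apply Hwh.
    exact (proj2 (zone12_iff_not_between Hm Hxy Hyz Hxz Hwhy Hwhz) h). }
  exact (Hwx (between_branch_sym Hwhx Hn)).
Qed.

End Steiner.

End TreeSpace.

Theorem lemma3 (X : Type) (d : X -> X -> R) (x y z r : X) (V : list X) :
  tree_space d ->
  x <> y -> y <> z -> x <> z ->
  steiner_point d x y z r ->
  ~ In x V -> ~ In y V -> ~ In z V ->
  (forall w, In w V -> zone1 d x y z w ->
     forall wh, In wh V -> ~ zone1 d x y z wh -> in_g d w wh x) /\
  (forall w, In w V -> zone2 d x y z w ->
     forall wh, In wh V -> ~ zone1 d x y z wh -> ~ zone2 d x y z wh ->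
       in_g d w wh r).
Proof.
  intros Ht _ _ _ [Hxy [Hyz Hxz]] _ _ _.
  apply in_g_between in Hxy, Hyz, Hxz.
  split.
  - intros w _ Hw wh _ Hwh.
    exact (between_in_g Ht (zone1_between Ht Hw Hwh)).
  - intros w _ Hw wh _ Hwh1 Hwh2.
    apply (between_in_g Ht), (zone12_between Ht Hxy Hyz Hxz).
    + apply (zone12_iff (proj1 Ht)). now right.
    + rewrite (zone12_iff (proj1 Ht)). tauto.
Qed.
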